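(* Let $G$ be a countable residually finite group, $r>1$ an integer, and let $\eta\in\{1,\dots,r\}^G$ and $(\Gamma_n)_{n\ge1}$ be as constructed below. Then $(\Gamma_n)_{n\ge1}$ is a period structure for $\eta$; in particular each $\Gamma_n$ is an essential group of periods of $\eta$.
   Context: Setting: $(\Gamma_i)_{i\ge1}$ is a strictly decreasing sequence of finite index normal subgroups of $G$ with $\bigcap_i\Gamma_i=\{1_G\}$; put $\Gamma_0=G$. $(D_i)_{i\ge0}$ are finite subsets of $G$ with $D_0=\{1_G\}$, $D_i$ containing exactly one element of each coset of $\Gamma_i$, $1_G\in D_i\subseteq D_{i+1}$, $G=\bigcup_iD_i$, and $D_j=\bigcup_{v\in D_j\cap\Gamma_i}vD_i$ for $j>i\ge1$; also $[G:\Gamma_i]\ge3$ and $[\Gamma_i:\Gamma_{i+1}]\ge3$. Let $\Sigma=\{1,\dots,r\}$ and for $m\ge0$ let $\alpha_m\in\Sigma$ with $\alpha_m\equiv m\pmod r$. Put $J(0)=\{1_G\}$ and $J(m)=D_m\setminus\bigcup_{i=0}^{m-1}J(i)\Gamma_{i+1}$ for $m\ge1$; the sets $J(m)\Gamma_{m+1}$ ($m\ge0$) partition $G$, and $\eta(hg)=\alpha_{m+1}$ for $h\in J(m)$, $g\in\Gamma_{m+1}$. Shift: $\sigma^gx(h)=x(g^{-1}h)$. $\mathrm{Per}(x,\Gamma,\alpha)=\{g: x(\gamma g)=\alpha\ \forall\gamma\in\Gamma\}$, $\mathrm{Per}(x,\Gamma)=\bigcup_\alpha\mathrm{Per}(x,\Gamma,\alpha)$.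 A finite index $\Gamma$ is a group of periods of $\eta$ if $\mathrm{Per}(\eta,\Gamma)\ne\emptyset$, essential if $\mathrm{Per}(\eta,\Gamma,\alpha)\subseteq\mathrm{Per}(\sigma^g\eta,\Gamma,\alpha)$ for every $\alpha\in\Sigma$ implies $g\in\Gamma$. A period structure is a nested sequence of essential groups of periods $(\Gamma_n)$ with $G=\bigcup_n\mathrm{Per}(\eta,\Gamma_n)$. *)

From Stdlib Require Import Arith List Lia.
Import ListNotations.
Set Implicit Arguments.

Section Defs.
Variable G : Type.
Variable mul : G -> G -> G.
Variable inv : G -> G.
Variable one : G.

Definition is_group : Prop :=
  (forall a b c, mul a (mul b c) = mul (mul a b) c) /\
  (forall a, mul one a = a) /\ (forall a, mul a one = a) /\
  (forall a, mul (inv a) a = one) /\ (forall a, mul a (inv a) = one).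

Definition countable_carrier : Prop := exists f : G -> nat, forall x y, f x = f y -> x = y.

Definition is_subgroup (H : G -> Prop) : Prop :=
  H one /\ (forall a b, H a -> H b -> H (mul a b)) /\ (forall a, H a -> H (inv a)).

Definition is_normal (H : G -> Prop) : Prop :=
  is_subgroup H /\ forall g h, H h -> H (mul (inv g) (mul h g)).

Definition finite_index (H : G -> Prop) : Prop :=
  exists l : list G, forall g, exists d, In d l /\ H (mul (inv d) g).

(* [K : L] >= k  (L subgroup of K): k elements of K in pairwise distinct L-cosets *)
Definition index_ge (K L : G -> Prop) (k : nat) : Prop :=
  exists f : nat -> G, (forall i, i < k -> K (f i)) /\
    (forall i j, i < j -> j < k -> ~ L (mul (inv (f i)) (f j))).

Definition residually_finite : Prop :=
  forall g, g <> one -> exists H, is_normal H /\ finite_index H /\ ~ H g.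

Definition alpha (r m : nat) : nat := if m mod r =? 0 then r else m mod r.

Definition in_Sigma (r a : nat) : Prop := 1 <= a /\ a <= r.

Definition shift (g : G) (x : G -> nat) : G -> nat := fun h => x (mul (inv g) h).

Definition Per_a (x : G -> nat) (H : G -> Prop) (a : nat) (g : G) : Prop :=
  forall c, H c -> x (mul c g) = a.

Definition Per (r : nat) (x : G -> nat) (H : G -> Prop) (g : G) : Prop :=
  exists a, in_Sigma r a /\ Per_a x H a g.

Definition group_of_periods (r : nat) (x : G -> nat) (H : G -> Prop) : Prop :=
  is_subgroup H /\ finite_index H /\ exists g, Per r x H g.

Definition essential (r : nat) (x : G -> nat) (H : G -> Prop) : Prop :=
  forall g, (forall a, in_Sigma r a ->
               forall h, Per_a x H a h -> Per_a (shift g x) H a h) -> H g.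

(* period structure: nested sequence (indexed by n = 0,1,2,...) of essential
   groups of periods whose Per sets cover G *)
Definition period_structure (r : nat) (x : G -> nat) (Gs : nat -> G -> Prop) : Prop :=
  (forall n g, Gs (S n) g -> Gs n g) /\
  (forall n, group_of_periods r x (Gs n) /\ essential r x (Gs n)) /\
  (forall g, exists n, Per r x (Gs n) g).

(* The sets J(m): J(0) = {1}, J(m) = D_m \ U_{i<m} J(i) Gamma_{i+1}.
   cov m g  <->  g in U_{i<m} J(i) Gamma_{i+1}. *)
Definition J_from (D : nat -> list G) (m : nat) (c : G -> Prop) (h : G) : Prop :=
  match m with
  | O => h = one
  | S _ => In h (D m) /\ ~ c h
  end.

Fixpoint cov (Gam : nat -> G -> Prop) (D : nat -> list G) (m : nat) : G -> Prop :=
  match m with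
  | O => fun _ => False
  | S m' => fun g => cov Gam D m' g \/
      exists h c, J_from D m' (cov Gam D m') h /\ Gam (S m') c /\ g = mul h c
  end.

Definition J (Gam : nat -> G -> Prop) (D : nat -> list G) (m : nat) : G -> Prop :=
  J_from D m (cov Gam D m).

End Defs.

(** For [h ∈ J(m)] the coset [hΓ_(m+1)] carries the constant symbol
    [α_(m+1)], and these cosets cover [G]; this gives the periods.  For
    essentiality, let [g ∈ Γ_k \ Γ_(k+1)] with [k <= n] and [h ∈ J(k)]: the
    coset [g⁻¹hΓ_(k+1)] lies in [hΓ_k] but differs from [hΓ_(k+1)], so its
    representative [x ∈ D_(k+1)] belongs to [J(k+1)].  Then [gx] is a
    [Γ_(n+1)]-period point of [η] with symbol [α_(k+1)], whereas
    [σ^g η (gx) = η x = α_(k+2)], and [α_(k+2) <> α_(k+1)] since [r > 1]. *)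

From Stdlib Require Import Arith List Lia Classical.
Set Implicit Arguments.
Unset Strict Implicit.

Lemma mod_succ_neq (r m : nat) : 1 < r -> S m mod r <> m mod r.
Proof.
  intros Hr E.
  pose proof (Nat.div_mod_eq (S m) r). pose proof (Nat.div_mod_eq m r).
  assert (r * (S m / r) = r * (m / r) + 1) by lia.
  destruct (Nat.le_gt_cases (S m / r) (m / r)); nia.
Qed.

Lemma alpha_succ_neq (r m : nat) : 1 < r -> alpha r (S m) <> alpha r m.
Proof.
  intros Hr. pose proof (mod_succ_neq (m := m) Hr).
  pose proof (Nat.mod_upper_bound (S m) r ltac:(lia)).
  pose proof (Nat.mod_upper_bound m r ltac:(lia)).
  unfold alpha.
  destruct (Nat.eqb_spec (S m mod r) 0); destruct (Nat.eqb_spec (m mod r) 0); lia.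
Qed.

Lemma alpha_in_Sigma (r m : nat) : 1 < r -> in_Sigma r (alpha r m).
Proof.
  intros Hr. pose proof (Nat.mod_upper_bound m r ltac:(lia)).
  unfold in_Sigma, alpha. destruct (Nat.eqb_spec (m mod r) 0); lia.
Qed.

Lemma index_ge_nontrivial (G : Type) (mul : G -> G -> G) (inv : G -> G)
  (K L : G -> Prop) (k : nat) :
  2 <= k -> index_ge mul inv K L k -> exists g, ~ L g.
Proof.
  intros Hk (f & _ & Hf). exists (mul (inv (f 0)) (f 1)). apply Hf; lia.
Qed.

Lemma total_normal (G : Type) (mul : G -> G -> G) (inv : G -> G) (one : G)
  (H : G -> Prop) : (forall g, H g) -> is_normal mul inv one H.
Proof. intros HH. repeat split; intros; apply HH. Qed.

Section Toeplitz.

Variables (G : Type) (mul : G -> G -> G) (inv : G -> G) (one : G).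
Hypothesis HG : is_group mul inv one.

Lemma mul_assoc a b c : mul a (mul b c) = mul (mul a b) c.
Proof. apply HG. Qed.

Lemma mul_1_l a : mul one a = a.
Proof. apply HG. Qed.

Lemma mul_1_r a : mul a one = a.
Proof. apply HG. Qed.

Lemma mul_inv_l a : mul (inv a) a = one.
Proof. apply HG. Qed.

Lemma mul_inv_r a : mul a (inv a) = one.
Proof. apply HG. Qed.

Lemma inv_mul_cancel_l a b : mul (inv a) (mul a b) = b.
Proof. now rewrite mul_assoc, mul_inv_l, mul_1_l. Qed.

Lemma mul_inv_cancel_l a b : mul a (mul (inv a) b) = b.
Proof. now rewrite mul_assoc, mul_inv_r, mul_1_l. Qed.

Lemma inv_unique a b : mul a b = one -> inv a = b.
Proof. intros Hab. now rewrite <- (inv_mul_cancel_l a b), Hab, mul_1_r. Qed.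

Lemma inv_involutive a : inv (inv a) = a.
Proof. apply inv_unique, mul_inv_l. Qed.

Lemma inv_mul a b : inv (mul a b) = mul (inv b) (inv a).
Proof.
  apply inv_unique.
  now rewrite <- mul_assoc, mul_inv_cancel_l, mul_inv_r.
Qed.

Lemma inv_one : inv one = one.
Proof. apply inv_unique, mul_1_l. Qed.

(* Rewriting to right-associated words with all [a a⁻¹] cancelled is a normal
   form for the free group, so it decides every group identity we need. *)
Ltac group_simpl :=
  repeat first
    [ rewrite inv_mul | rewrite inv_involutive | rewrite inv_one
    | rewrite <- mul_assoc | rewrite mul_1_l | rewrite mul_1_r
    | rewrite inv_mul_cancel_l | rewrite mul_inv_cancel_l
    | rewrite mul_inv_l | rewrite mul_inv_r ].

Variable Gam : nat -> G -> Prop.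
Hypothesis Gam0_full : forall g, Gam 0 g.
Hypothesis Gam_normal : forall k, is_normal mul inv one (Gam k).
Hypothesis Gam_succ : forall k g, Gam (S k) g -> Gam k g.
Hypothesis Gam_strict : forall k, exists g, Gam k g /\ ~ Gam (S k) g.

Lemma Gam_one k : Gam k one.
Proof. apply Gam_normal. Qed.

Lemma Gam_mul k a b : Gam k a -> Gam k b -> Gam k (mul a b).
Proof. apply Gam_normal. Qed.

Lemma Gam_inv k a : Gam k a -> Gam k (inv a).
Proof. apply Gam_normal. Qed.

Lemma Gam_conj k g h : Gam k h -> Gam k (mul (inv g) (mul h g)).
Proof. apply Gam_normal. Qed.

Lemma Gam_le j k c : j <= k -> Gam k c -> Gam j c.
Proof. induction 1; auto. Qed.

Definition same_coset k a b := Gam k (mul (inv a) b).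

Lemma same_coset_sym k a b : same_coset k a b -> same_coset k b a.
Proof.
  unfold same_coset. intros Hab. apply Gam_inv in Hab.
  now rewrite inv_mul, inv_involutive in Hab.
Qed.

Lemma same_coset_trans k a b c :
  same_coset k a b -> same_coset k b c -> same_coset k a c.
Proof.
  unfold same_coset. intros Hab Hbc.
  replace (mul (inv a) c) with (mul (mul (inv a) b) (mul (inv b) c))
    by now group_simpl.
  now apply Gam_mul.
Qed.

Lemma same_coset_le j k a b : j <= k -> same_coset k a b -> same_coset j a b.
Proof. apply Gam_le. Qed.

Lemma same_coset_mul_r k a c : Gam k c -> same_coset k a (mul a c).
Proof. unfold same_coset. now rewrite inv_mul_cancel_l. Qed.

Variable D : nat -> list G.
Hypothesis D_rep : forall i g, exists d, In d (D i) /\ same_coset i d g.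
Hypothesis D_uniq : forall i d d', In d (D i) -> In d' (D i) ->
  same_coset i d d' -> d = d'.
Hypothesis D0_one : forall g, In g (D 0) <-> g = one.
Hypothesis D_cover : forall g, exists i, In g (D i).

Notation cov := (cov mul one Gam D).
Notation J := (J mul one Gam D).

Lemma cov_iff m g : cov m g <->
  exists j h c, j < m /\ J j h /\ Gam (S j) c /\ g = mul h c.
Proof.
  induction m as [|m IH]; simpl.
  - split; [tauto|]. intros (j & _ & _ & Hj & _). lia.
  - rewrite IH. split.
    + intros [(j & h & c & Hj & Hh & Hc & ->) | (h & c & Hh & Hc & ->)].
      * exists j, h, c. auto.
      * exists m, h, c. auto.
    + intros (j & h & c & Hj & Hh & Hc & ->).
      destruct (Nat.eq_dec j m) as [->|Hne].
      * right. exists h, c. auto.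
      * left. exists j, h, c. split; [lia|auto].
Qed.

Lemma J_in_D k h : J k h -> In h (D k).
Proof. destruct k; [intros ->; apply D0_one | intros []]; auto. Qed.

Lemma J_not_cov k h : J k h -> ~ cov k h.
Proof. destruct k; [intros _ []| intros []]; auto. Qed.

Lemma J_of_D_cov_free i g : In g (D i) -> ~ cov i g -> J i g.
Proof. destruct i; intros Hg Hc; [now apply D0_one | now split]. Qed.

Lemma J_succ k h x : J k h -> In x (D (S k)) ->
  same_coset k h x -> ~ same_coset (S k) h x -> J (S k) x.
Proof.
  intros Hh Hx Hhx Hhx'. split; [exact Hx|].
  rewrite cov_iff. intros (j & h' & c & Hj & Hh' & Hc & ->).
  assert (Hh'x : same_coset (S j) h' (mul h' c)) by now apply same_coset_mul_r.
  destruct (Nat.eq_dec j k) as [->|Hne].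
  - assert (h' = h) as ->.
    { apply (D_uniq (J_in_D Hh') (J_in_D Hh)).
      apply (same_coset_trans (b := mul h' c)); [|now apply same_coset_sym].
      apply (same_coset_le (k := S k)); [lia|exact Hh'x]. }
    contradiction.
  - assert (Hh'h : same_coset (S j) h' h).
    { apply (same_coset_trans Hh'x), same_coset_sym, (same_coset_le (k := k)).
      - lia.
      - exact Hhx. }
    apply (J_not_cov Hh). rewrite cov_iff.
    exists j, h', (mul (inv h') h). repeat split; auto; [lia|now group_simpl].
Qed.

Lemma J_nonempty k : exists h, J k h.
Proof.
  induction k as [|k [h Hh]]; [now exists one|].
  destruct (Gam_strict k) as (w & Hw & Hw').
  destruct (D_rep (S k) (mul h w)) as (x & Hx & Hxhw).
  exists x. apply (J_succ Hh Hx).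
  - apply (same_coset_trans (b := mul h w)); [now apply same_coset_mul_r|].
    apply same_coset_sym, (same_coset_le (k := S k)); auto.
  - intros Hhx. apply Hw'.
    assert (same_coset (S k) h (mul h w)) as Hhw
      by exact (same_coset_trans Hhx Hxhw).
    unfold same_coset in Hhw. now rewrite inv_mul_cancel_l in Hhw.
Qed.

Lemma J_cosets_cover g : exists j h c, J j h /\ Gam (S j) c /\ g = mul h c.
Proof.
  destruct (D_cover g) as [i Hi].
  destruct (classic (cov i g)) as [Hc|Hc].
  - apply cov_iff in Hc. destruct Hc as (j & h & c & _ & Hh & Hc & ->).
    now exists j, h, c.
  - exists i, g, one. rewrite mul_1_r.
    auto using J_of_D_cov_free, Gam_one.
Qed.

Variables (r : nat) (eta : G -> nat).
Hypothesis Hr : 1 < r.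
Hypothesis eta_J : forall m h c, J m h -> Gam (S m) c ->
  eta (mul h c) = alpha r (S m).

Lemma Per_a_J n j h c : j <= n -> J j h -> Gam (S j) c ->
  Per_a mul eta (Gam (S n)) (alpha r (S j)) (mul h c).
Proof.
  intros Hjn Hh Hc c' Hc'.
  replace (mul c' (mul h c)) with (mul h (mul (mul (inv h) (mul c' h)) c))
    by now group_simpl.
  apply eta_J; auto.
  apply Gam_mul; auto. apply Gam_conj, (Gam_le (k := S n)); [lia|auto].
Qed.

Lemma shift_breaks_period n k g : k <= n -> Gam k g -> ~ Gam (S k) g ->
  exists y, Per_a mul eta (Gam (S n)) (alpha r (S k)) y /\
    ~ Per_a mul (shift mul inv g eta) (Gam (S n)) (alpha r (S k)) y.
Proof.
  intros Hkn Hg Hg'.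
  destruct (J_nonempty k) as [h Hh].
  destruct (D_rep (S k) (mul (inv g) h)) as (x & Hx & Hxy).
  assert (Hhy : same_coset k h (mul (inv g) h)).
  { unfold same_coset. apply Gam_conj, Gam_inv, Hg. }
  assert (Hhy' : ~ same_coset (S k) h (mul (inv g) h)).
  { unfold same_coset. intros Hc. apply Hg'.
    apply (Gam_conj (inv h)), Gam_inv in Hc. revert Hc. now group_simpl. }
  assert (HJx : J (S k) x).
  { apply (J_succ Hh Hx).
    - apply (same_coset_trans Hhy), same_coset_sym.
      apply (same_coset_le (k := S k)); auto.
    - intros Hhx. exact (Hhy' (same_coset_trans Hhx Hxy)). }
  exists (mul g x). split.
  - replace (mul g x) with (mul h (mul (inv h) (mul g x))) by now group_simpl.
    apply Per_a_J; auto.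
    apply same_coset_sym in Hxy. unfold same_coset in Hxy. revert Hxy. now group_simpl.
  - intros Hper. specialize (Hper one (Gam_one _)). unfold shift in Hper.
    rewrite mul_1_l, inv_mul_cancel_l, <- (mul_1_r x), (eta_J HJx (Gam_one _)) in Hper.
    exact (alpha_succ_neq (m := S k) Hr Hper).
Qed.

Lemma Gam_essential n : essential mul inv r eta (Gam (S n)).
Proof.
  intros g Hg.
  enough (forall k, k <= S n -> Gam k g) by auto.
  induction k as [|k IH]; intros Hk; [apply Gam0_full|].
  apply NNPP. intros Hg'.
  destruct (shift_breaks_period (n := n) (k := k) ltac:(lia) (IH ltac:(lia)) Hg')
    as (y & Hper & Hnper).
  exact (Hnper (Hg _ (alpha_in_Sigma (S k) Hr) y Hper)).
Qed.

Lemma Per_one n : Per mul r eta (Gam (S n)) one.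
Proof.
  exists (alpha r 1). split; [apply alpha_in_Sigma, Hr|].
  rewrite <- (mul_1_r one). apply Per_a_J; [lia|reflexivity|apply Gam_one].
Qed.

Lemma Per_cover g : exists n, Per mul r eta (Gam (S n)) g.
Proof.
  destruct (J_cosets_cover g) as (j & h & c & Hh & Hc & ->).
  exists j, (alpha r (S j)). split; [apply alpha_in_Sigma, Hr|].
  apply Per_a_J; auto.
Qed.

Hypothesis Gam_finite : forall k, finite_index mul inv (Gam (S k)).

Theorem Gam_period_structure : period_structure mul inv one r eta (fun n => Gam (S n)).
Proof.
  split; [|split].
  - intros n g. apply Gam_succ.
  - intros n. split; [|exact (Gam_essential (n := n))].
    split; [apply Gam_normal|split; [apply Gam_finite|exists one; apply Per_one]].
  - exact Per_cover.
Qed.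

End Toeplitz.

Theorem proposition4p1
  (G : Type) (mul : G -> G -> G) (inv : G -> G) (one : G)
  (HG : is_group mul inv one)
  (Hcount : countable_carrier G)
  (Hrf : residually_finite mul inv one)
  (r : nat) (Hr : 1 < r)
  (Gam : nat -> G -> Prop) (D : nat -> list G)
  (* Gamma_0 = G; for i >= 1 finite index normal subgroups *)
  (HGam0 : forall g, Gam 0 g)
  (HGnorm : forall i, 1 <= i -> is_normal mul inv one (Gam i))
  (HGfin : forall i, 1 <= i -> finite_index mul inv (Gam i))
  (* strictly decreasing *)
  (HGdec : forall i, 1 <= i -> forall g, Gam (S i) g -> Gam i g)
  (HGstrict : forall i, 1 <= i -> exists g, Gam i g /\ ~ Gam (S i) g)
  (* trivial intersection *)
  (HGint : forall g, (forall i, 1 <= i -> Gam i g) -> g = one)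
  (* index conditions *)
  (HGidx1 : forall i, 1 <= i -> index_ge mul inv (fun _ => True) (Gam i) 3)
  (HGidx2 : forall i, 1 <= i -> index_ge mul inv (Gam i) (Gam (S i)) 3)
  (* D_0 = {1} *)
  (HD0 : forall g, In g (D 0) <-> g = one)
  (* D_i contains exactly one element of each coset of Gamma_i *)
  (HDex : forall i g, exists d, In d (D i) /\ Gam i (mul (inv d) g))
  (HDun : forall i d d', In d (D i) -> In d' (D i) -> Gam i (mul (inv d) d') -> d = d')
  (* 1 in D_i subset D_{i+1} *)
  (HD1 : forall i, In one (D i))
  (HDinc : forall i g, In g (D i) -> In g (D (S i)))
  (* G = U_i D_i *)
  (HDcov : forall g, exists i, In g (D i))
  (* D_j = U_{v in D_j cap Gamma_i} v D_i  for j > i >= 1 *)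
  (HDstr : forall i j, 1 <= i -> i < j -> forall g,
      In g (D j) <-> exists v d, In v (D j) /\ Gam i v /\ In d (D i) /\ g = mul v d)
  (* the Toeplitz element eta *)
  (eta : G -> nat)
  (Heta : forall m h c, J mul one Gam D m h -> Gam (S m) c ->
            eta (mul h c) = alpha r (S m)) :
  period_structure mul inv one r eta (fun n => Gam (S n)).
Proof.
  assert (Gam_normal : forall k, is_normal mul inv one (Gam k)).
  { intros [|k]; [exact (total_normal mul inv one HGam0) | apply HGnorm; lia]. }
  assert (Gam_succ : forall k g, Gam (S k) g -> Gam k g).
  { intros [|k] g Hg; [apply HGam0 | apply HGdec; [lia | exact Hg]]. }
  assert (Gam_strict : forall k, exists g, Gam k g /\ ~ Gam (S k) g).
  { intros [|k].
    - destruct (index_ge_nontrivial (k := 3) ltac:(lia) (HGidx1 1 (le_n 1))) as [g Hg].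
      exists g. auto.
    - apply HGstrict. lia. }
  apply Gam_period_structure with (D := D); auto.
  intros k. apply HGfin. lia.
Qed.
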